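(* There are infinitely many positive integers $N$ for which there is no representation $N=A/B$ with $A,B$ antipalindromic numbers.
   Context: A positive integer $n$ is antipalindromic if its binary representation $w=w_1\cdots w_L$ (most significant digit first, no leading zeros) has even length $L$ and satisfies $w_i+w_{L+1-i}=1$ for all $i$. *)

From mathcomp Require Import all_boot.

Definition binlen (n : nat) : nat := (trunc_log 2 n).+1.

Definition bit (n j : nat) : nat := (n %/ 2 ^ j) %% 2.

(* n is antipalindromic: n > 0, its binary representation w_1..w_L
   (w_1 most significant) has even length L and w_i + w_{L+1-i} = 1.
   With w_i = bit n (L - i), the condition for i = 1..L reads
   bit n j + bit n (L-1-j) = 1 for j = 0..L-1. *)
Definition antipalindromic (n : nat) : bool :=
  [&& 0 < n, ~~ odd (binlen n) &
      all (fun j => bit n j + bit n ((binlen n).-1 - j) == 1) (iota 0 (binlen n))].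

From mathcomp Require Import all_boot.
From mathcomp Require Import zify.

Set Implicit Arguments.
Unset Strict Implicit.
Unset Printing Implicit Defensive.

(* If A = 2^m B with m > 0 and t is the 2-adic valuation of B, then bit t of B is 1,
   so its mirror bit in B is 0. In A, bit t is 0 (it lies below the valuation t + m),
   and its mirror bit in A is the same as the mirror bit in B, because multiplying by
   2^m shifts all bits and the length together. So that pair of mirrored bits of A sums
   to 0, and A and B cannot both be antipalindromic. Every N = 2^m with m > 0 is
   therefore not a quotient of two antipalindromic numbers. *)

Lemma bit_eq0_dvdn n j : 2 ^ j.+1 %| n -> bit n j = 0.
Proof.
move=> /dvdnP[k ->]; rewrite /bit expnS mulnA mulnK ?expn_gt0 //.
exact: modnMl.
Qed.

Lemma bit_mul_exp2 n m j : m <= j -> bit (n * 2 ^ m) j = bit n (j - m).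
Proof.
by move=> le_mj; rewrite /bit -{1}(subnK le_mj) expnD divnMr ?expn_gt0.
Qed.

Lemma binlen_mul_exp2 n m : 0 < n -> binlen (n * 2 ^ m) = binlen n + m.
Proof.
move=> n_gt0; rewrite /binlen addSn; congr S.
have /andP[lb ub] := trunc_log_bounds (isT : 1 < 2) n_gt0.
apply: trunc_log_eq => //; rewrite -addSn !expnD.
by rewrite leq_mul2r lb orbT ltn_mul2r expn_gt0 ub.
Qed.

Lemma bit_logn2 n : 0 < n -> bit n (logn 2 n) = 1.
Proof.
move=> n_gt0; have [q coprime_2q def_n] := pfactor_coprime (isT : prime 2) n_gt0.
rewrite /bit {1}def_n mulnK ?expn_gt0 // modn2.
by rewrite -coprime2n coprime_2q.
Qed.

Lemma logn2_lt_binlen n : 0 < n -> logn 2 n < binlen n.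
Proof.
move=> n_gt0; rewrite /binlen ltnS; apply: trunc_log_max => //.
exact: dvdn_leq n_gt0 (pfactor_dvdnn 2 n).
Qed.

Lemma antipalindromicP n j : antipalindromic n -> j < binlen n ->
  bit n j + bit n ((binlen n).-1 - j) = 1.
Proof.
move=> /and3P[_ _ /allP mirror] lt_j; apply/eqP/mirror.
by rewrite mem_iota.
Qed.

Lemma antipalindromic_gt0 n : antipalindromic n -> 0 < n.
Proof. by case/and3P. Qed.

Lemma antipalindromic_mul_exp2 n m : 0 < m -> antipalindromic n ->
  ~~ antipalindromic (n * 2 ^ m).
Proof.
move=> m_gt0 anti_n; apply/negP => anti_nm.
have n_gt0 := antipalindromic_gt0 anti_n.
have t_lt_L := logn2_lt_binlen n_gt0.
have mirror_n : bit n ((binlen n).-1 - logn 2 n) = 0.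
  by have := antipalindromicP anti_n t_lt_L; rewrite bit_logn2 // add1n => -[].
have low_nm : bit (n * 2 ^ m) (logn 2 n) = 0.
  apply: bit_eq0_dvdn; rewrite expnS mulnC.
  by apply: dvdn_mul; [exact: pfactor_dvdnn | rewrite -(prednK m_gt0) expnS dvdn_mulr].
have mirror_nm : bit (n * 2 ^ m) ((binlen n + m).-1 - logn 2 n) = 0.
  rewrite bit_mul_exp2; last by lia.
  by rewrite (_ : _ - m = (binlen n).-1 - logn 2 n) //; lia.
have t_lt_Lm : logn 2 n < binlen (n * 2 ^ m) by rewrite binlen_mul_exp2 // ltn_addr.
by have := antipalindromicP anti_nm t_lt_Lm; rewrite binlen_mul_exp2 // low_nm mirror_nm.
Qed.

Theorem theorem18 :
  forall M : nat, exists N : nat, M < N /\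
    ~ (exists A B : nat, antipalindromic A /\ antipalindromic B /\ A = N * B).
Proof.
move=> M; exists (2 ^ M.+1); split; first exact: ltnW (ltn_expl _ (isT : 1 < 2)).
move=> [A [B [anti_A [anti_B def_A]]]].
have := antipalindromic_mul_exp2 (ltn0Sn M) anti_B.
by rewrite mulnC -def_A anti_A.
Qed.
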